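(* Let $S=s_1,\ldots,s_n$ be a sequence of positive real numbers with mean $\mu=\frac1n\sum_is_i$, let $\alpha>1$, $\gamma>0$, and let $k$ be a positive integer. If $(L,\beta)$ is an optimal solution of $\textsc{Exp}(\alpha)$ for $S,\alpha,\gamma,k$, then \[ \frac{1}{\alpha^k\mu}\le\beta\le\frac1\mu. \]
   Context: A level sequence is $L=\ell_1,\ldots,\ell_n$ of integers with $0\le\ell_i\le k$; set $\ell_0=0$. The penalty is $\mathrm{pen}(x,y)=\max(y-x,0)\,\gamma\log n$; $p_{\exp}(s;\lambda)=\lambda e^{-\lambda s}$; $\mathrm{score}_{\exp}(L,S;\alpha,\beta,\gamma)=\sum_{i=1}^n\big[-\log p_{\exp}(s_i;\beta\alpha^{\ell_i})+\mathrm{pen}(\ell_{i-1},\ell_i)\big]$. Problem $\textsc{Exp}(\alpha)$: given $S,\alpha,\gamma,k$, find $L$ and $\beta>0$ minimizing this score. *)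

From Stdlib Require Import Reals List.
Import ListNotations.
Open Scope R_scope.

Definition sum1n (n : nat) (f : nat -> R) : R :=
  fold_right Rplus 0 (map f (seq 1 n)).

(* Level sequence L : nat -> nat, used at indices 1..n; ell_0 = 0. *)
Definition lev (L : nat -> nat) (i : nat) : nat :=
  match i with O => O | _ => L i end.

Definition valid_levels (n k : nat) (L : nat -> nat) : Prop :=
  forall i, (1 <= i <= n)%nat -> (L i <= k)%nat.

Definition pen (n : nat) (gamma : R) (x y : nat) : R :=
  Rmax (INR y - INR x) 0 * gamma * ln (INR n).

Definition p_exp (s lam : R) : R := lam * exp (- lam * s).

Definition score_exp (n : nat) (S : nat -> R) (L : nat -> nat)
    (alpha beta gamma : R) : R :=
  sum1n n (fun i =>
    - ln (p_exp (S i) (beta * alpha ^ (lev L i)))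
    + pen n gamma (lev L (i - 1)) (lev L i)).

Definition optimal_exp (n : nat) (S : nat -> R) (alpha gamma : R) (k : nat)
    (L : nat -> nat) (beta : R) : Prop :=
  valid_levels n k L /\ 0 < beta /\
  forall (L' : nat -> nat) (beta' : R),
    valid_levels n k L' -> 0 < beta' ->
    score_exp n S L alpha beta gamma <= score_exp n S L' alpha beta' gamma.

(* Once the levels are fixed, the score as a function of beta is
   C - n ln beta + beta A with A = sum_i alpha^(l_i) s_i, which is strictly
   convex with unique minimiser n / A.  An optimal beta is therefore n / A,
   and since 1 <= alpha^(l_i) <= alpha^k, the weighted sum A lies between
   n mu and alpha^k n mu. *)

From Stdlib Require Import Reals List Lra Lia.
Import ListNotations.
Open Scope R_scope.

Definition sum_map (l : list nat) (f : nat -> R) : R :=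
  fold_right Rplus 0 (map f l).

Lemma sum1nE n f : sum1n n f = sum_map (seq 1 n) f.
Proof. reflexivity. Qed.

Lemma sum_map_ext l f g :
  (forall x, In x l -> f x = g x) -> sum_map l f = sum_map l g.
Proof.
  unfold sum_map; intros H; f_equal; apply map_ext_in; exact H.
Qed.

Lemma sum_map_plus l f g :
  sum_map l (fun i => f i + g i) = sum_map l f + sum_map l g.
Proof. induction l; unfold sum_map in *; simpl; [lra | rewrite IHl; lra]. Qed.

Lemma sum_map_scal l c f : sum_map l (fun i => c * f i) = c * sum_map l f.
Proof. induction l; unfold sum_map in *; simpl; [lra | rewrite IHl; lra]. Qed.

Lemma sum_map_const l c : sum_map l (fun _ => c) = INR (length l) * c.
Proof.
  induction l; unfold sum_map in *; cbn [length map fold_right]; [simpl; lra |].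
  rewrite IHl, S_INR; lra.
Qed.

Lemma sum_map_le l f g :
  (forall x, In x l -> f x <= g x) -> sum_map l f <= sum_map l g.
Proof.
  induction l as [|a l IH]; intros H; unfold sum_map in *; simpl; [lra |].
  assert (f a <= g a) by (apply H; left; reflexivity).
  assert (fold_right Rplus 0 (map f l) <= fold_right Rplus 0 (map g l))
    by (apply IH; intros; apply H; right; assumption).
  lra.
Qed.

Lemma sum_map_pos l f :
  l <> nil -> (forall x, In x l -> 0 < f x) -> 0 < sum_map l f.
Proof.
  induction l as [|a [|b l] IH]; intros Hl H; [congruence | |];
    unfold sum_map in *; simpl in *.
  - specialize (H a (or_introl eq_refl)); lra.
  - assert (0 < f a) by (apply H; left; reflexivity).
    assert (0 < f b + fold_right Rplus 0 (map f l))
      by (apply IH; [discriminate | intros; apply H; right; assumption]).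
    lra.
Qed.

Lemma sum1n_pos n f :
  (1 <= n)%nat -> (forall i, (1 <= i <= n)%nat -> 0 < f i) -> 0 < sum1n n f.
Proof.
  intros Hn Hf; rewrite sum1nE; apply sum_map_pos.
  - destruct n; [lia | discriminate].
  - intros i Hi; apply in_seq in Hi; apply Hf; lia.
Qed.

Lemma ln_lt_sub1 x : 0 < x -> x <> 1 -> ln x < x - 1.
Proof.
  intros Hx Hx1.
  pose proof (exp_ineq1 (ln x) (ln_neq_0 x Hx1 Hx)) as H.
  rewrite exp_ln in H by exact Hx; lra.
Qed.

(* Writing b = x (c / A), the objective becomes its value at c / A plus
   c (x - 1 - ln x), which vanishes only at x = 1. *)
Lemma neg_ln_linear_argmin c A b :
  0 < c -> 0 < A -> 0 < b ->
  - c * ln b + b * A <= - c * ln (c / A) + c / A * A ->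
  b = c / A.
Proof.
  intros Hc HA Hb Hle.
  set (x := b * A / c).
  assert (Hx : 0 < x) by (unfold x; apply Rdiv_lt_0_compat; nra).
  assert (Hb_x : b = x * (c / A)) by (unfold x; field; lra).
  destruct (Req_dec x 1) as [E | E].
  - rewrite Hb_x, E; ring.
  - exfalso.
    pose proof (ln_lt_sub1 x Hx E).
    assert (HcA : 0 < c / A) by (apply Rdiv_lt_0_compat; assumption).
    rewrite Hb_x, ln_mult in Hle by assumption.
    replace (x * (c / A) * A) with (c * x) in Hle by (field; lra).
    replace (c / A * A) with c in Hle by (field; lra).
    nra.
Qed.

Section FixedLevels.

Variables (n : nat) (S : nat -> R) (L : nat -> nat) (alpha gamma : R).
Let weighted_sum : R := sum1n n (fun i => alpha ^ lev L i * S i).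

Lemma score_exp_beta b :
  0 < alpha -> 0 < b ->
  score_exp n S L alpha b gamma =
    sum1n n (fun i => - ln (alpha ^ lev L i) + pen n gamma (lev L (i - 1)) (lev L i))
    - INR n * ln b + b * weighted_sum.
Proof.
  intros Ha Hb.
  unfold score_exp, weighted_sum; rewrite !sum1nE.
  rewrite (sum_map_ext _ _ (fun i =>
      (- ln (alpha ^ lev L i) + pen n gamma (lev L (i - 1)) (lev L i))
      + (- ln b) + b * (alpha ^ lev L i * S i))).
  - rewrite !sum_map_plus, sum_map_const, sum_map_scal, length_seq; ring.
  - intros i _; unfold p_exp.
    assert (0 < alpha ^ lev L i) by (apply pow_lt; assumption).
    rewrite ln_mult, ln_exp, ln_mult by (try apply Rmult_lt_0_compat; auto using exp_pos).
    ring.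
Qed.

Hypothesis alpha_ge1 : 1 <= alpha.
Hypothesis S_pos : forall i, (1 <= i <= n)%nat -> 0 < S i.

Lemma sum1n_le_weighted_sum : sum1n n S <= weighted_sum.
Proof.
  unfold weighted_sum; rewrite !sum1nE; apply sum_map_le.
  intros i Hi; apply in_seq in Hi.
  assert (1 <= alpha ^ lev L i)
    by (unfold lev; destruct i; [lia | apply pow_R1_Rle; lra]).
  assert (0 < S i) by (apply S_pos; lia).
  nra.
Qed.

Lemma weighted_sum_le k :
  valid_levels n k L -> weighted_sum <= alpha ^ k * sum1n n S.
Proof.
  intros Hv; unfold weighted_sum; rewrite !sum1nE, <- sum_map_scal.
  apply sum_map_le; intros i Hi; apply in_seq in Hi.
  assert (alpha ^ lev L i <= alpha ^ k)
    by (unfold lev; destruct i; [lia | apply Rle_pow; [lra | apply Hv; lia]]).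
  assert (0 < S i) by (apply S_pos; lia).
  nra.
Qed.

Hypothesis n_pos : (1 <= n)%nat.

Lemma optimal_exp_beta k beta :
  optimal_exp n S alpha gamma k L beta -> beta = INR n / weighted_sum.
Proof.
  intros [Hv [Hb Hopt]].
  assert (Hn : 0 < INR n) by (apply lt_0_INR; lia).
  assert (HA : 0 < weighted_sum)
    by (pose proof (sum1n_pos n S n_pos S_pos); pose proof sum1n_le_weighted_sum; lra).
  assert (Hb' : 0 < INR n / weighted_sum) by (apply Rdiv_lt_0_compat; assumption).
  specialize (Hopt L _ Hv Hb').
  rewrite !score_exp_beta in Hopt by lra.
  apply neg_ln_linear_argmin; [assumption .. | lra].
Qed.

End FixedLevels.

Theorem lemma8 (n : nat) (S : nat -> R) (alpha gamma : R) (k : nat)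
    (L : nat -> nat) (beta : R) :
  (1 <= n)%nat ->
  (forall i, (1 <= i <= n)%nat -> 0 < S i) ->
  1 < alpha -> 0 < gamma -> (1 <= k)%nat ->
  optimal_exp n S alpha gamma k L beta ->
  let mu := sum1n n S / INR n in
  1 / (alpha ^ k * mu) <= beta <= 1 / mu.
Proof.
  intros Hn HS Ha _ _ Hopt mu.
  assert (Ha1 : 1 <= alpha) by lra.
  pose proof (optimal_exp_beta n S L alpha gamma Ha1 HS Hn k beta Hopt) as Hbeta.
  pose proof (sum1n_le_weighted_sum n S L alpha Ha1 HS) as Hlow.
  pose proof (weighted_sum_le n S L alpha Ha1 HS k (proj1 Hopt)) as Hup.
  pose proof (sum1n_pos n S Hn HS) as HT.
  assert (Hn0 : 0 < INR n) by (apply lt_0_INR; lia).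
  assert (Hk : 0 < alpha ^ k) by (apply pow_lt; lra).
  subst beta mu.
  set (T := sum1n n S) in *.
  replace (1 / (alpha ^ k * (T / INR n))) with (INR n / (alpha ^ k * T)) by (field; lra).
  replace (1 / (T / INR n)) with (INR n / T) by (field; lra).
  split; unfold Rdiv; apply Rmult_le_compat_l; try lra;
    apply Rinv_le_contravar; nra.
Qed.
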